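(* Let $\Gamma$ be a simplicial complex and $r\ge 3$. Suppose $v_1,\dots,v_r$ are (not necessarily distinct) vertices of $\Gamma$ such that $\{v_i,v_{i+1}\}$ is an edge of $\Gamma$ for each $1\le i\le r$ (indices mod $r$), and suppose there is at most one index $i$ (mod $r$) such that $\{v_{i-1},v_i,v_{i+1}\}\in\Gamma$. Then $\mathrm{gr}_1(\Gamma)\le r$.
   Context: A simplicial complex $\Gamma$ on a finite vertex set $V=V(\Gamma)$ is a family of subsets of $V$ (faces) closed under taking subsets; edges are faces with 2 elements. Note $\{v_{i-1},v_i,v_{i+1}\}$ is a set, so if $v_{i-1}=v_{i+1}$ it equals the edge $\{v_i,v_{i+1}\}$. For $W\subseteq V$, $\Gamma[W]=\{F\in\Gamma:F\subseteq W\}$. For a face $F$ (possibly empty), $\mathrm{lk}_\Gamma(F)=\{G\setminus F: F\subseteq G\in\Gamma\}$. Fix a field $\mathbf{k}$; $\tilde H_i(\cdot;\mathbf{k})$ is reduced simplicial homology. The $1$-girth is $\mathrm{gr}_{1}(\Gamma)=\min\{|W|: W\subseteq V(\Gamma),\ \tilde H_{1}(\mathrm{lk}_\Gamma(F)[W];\mathbf{k})\neq 0 \text{ for some face } F\in\Gamma \text{ (including } F=\emptyset)\}$, or $\infty$ if none exists. *)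

From HB Require Import structures.
From mathcomp Require Import all_boot all_order all_algebra.
Set Implicit Arguments. Unset Strict Implicit. Unset Printing Implicit Defensive.
Import GRing.Theory.

(* Simplicial complexes on the vertex type 'I_n (vertices ordered by value). *)
Definition is_complex (n : nat) (G : {set {set 'I_n}}) : Prop :=
  forall F H : {set 'I_n}, F \in G -> H \subset F -> H \in G.

Definition verts n (G : {set {set 'I_n}}) : {set 'I_n} := \bigcup_(F in G) F.

Definition induced n (G : {set {set 'I_n}}) (W : {set 'I_n}) : {set {set 'I_n}} :=
  [set H in G | H \subset W].

Definition link n (G : {set {set 'I_n}}) (F : {set 'I_n}) : {set {set 'I_n}} :=
  [set H :\: F | H in [set H in G | F \subset H]].

(* faces of cardinality d (i.e. of dimension d-1) *)
Definition faces n (G : {set {set 'I_n}}) (d : nat) : {set {set 'I_n}} :=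
  [set H in G | #|H| == d].

(* incidence coefficient [F : H] for H = F minus one vertex x:
   (-1)^(position of x in F), F sorted increasingly; 0 otherwise *)
Definition bd_coef (k : fieldType) n (F H : {set 'I_n}) : k :=
  if (H \subset F) && (#|F :\: H| == 1%N) then
    (\sum_(x in F :\: H) (- 1) ^+ #|[set y in F | (y < x)%N]|)%R
  else 0%R.

(* boundary matrix C_{d-1} -> C_{d-2} (row vector convention), rows indexed
   by faces with d vertices, columns by faces with d-1 vertices *)
Definition bdmx (k : fieldType) n (G : {set {set 'I_n}}) (d : nat) :
  'M[k]_(#|faces G d|, #|faces G d.-1|) :=
  \matrix_(i, j) bd_coef k (enum_val i) (enum_val j).

(* reduced homology in degree 1 over k is nonzero:
   ker d_1 is not contained in im d_2 *)
Definition H1_nonzero (k : fieldType) n (G : {set {set 'I_n}}) : bool :=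
  ~~ (kermx (bdmx k G 2) <= bdmx k G 3)%MS.

Definition gr1_witnesses (k : fieldType) n (G : {set {set 'I_n}}) : {set {set 'I_n}} :=
  [set W : {set 'I_n} | (W \subset verts G) &&
     [exists F in G, H1_nonzero k (induced (link G F) W)]].

(* 1-girth: None stands for infinity *)
Definition gr1 (k : fieldType) n (G : {set {set 'I_n}}) : option nat :=
  if gr1_witnesses k G == set0 then None
  else Some (\big[minn/n.+1]_(W in gr1_witnesses k G) #|W|).

From HB Require Import structures.
From mathcomp Require Import all_boot all_order all_algebra zify.
Import GRing.Theory.
Set Implicit Arguments. Unset Strict Implicit. Unset Printing Implicit Defensive.

(* Homological part: a complex without 2-simplices and with at least as
   many edges as vertices has nonzero H_1, because the rows of the boundary
   matrix d_1 sum to zero, so rank d_1 < #vertices <= #edges while d_2 = 0.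
   An induced cycle of length m (chordless, and not spanning a 2-simplex
   when m = 3) has exactly this shape as an induced subcomplex on its m
   vertices, which gives gr_1 <= m (with the empty face, whose link is the
   whole complex).

   Combinatorial part: rotate the cyclic sequence v so that its only
   possible face-spanning corner sits at the endpoint of a closed walk
   w 0, ..., w r = w 0.  Among all chords {w p, w (p + d)} in G with d >= 2
   (the closing of the walk is one), a shortest one cuts out an induced
   cycle of length d or d + 1 <= r, depending on whether its ends coincide. *)

(* A matrix whose rows all sum to zero has the all-ones vector in the kernel
   of its transpose, so its rank is smaller than its number of columns. *)
Lemma rank_lt_of_zero_rowsums (k : fieldType) p q (A : 'M[k]_(p, q)) :
  0 < q -> (forall i, (\sum_j A i j)%R = 0%R) -> \rank A < q.
Proof.
move=> q_gt0 rowsum0.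
set ones : 'rV[k]_q := const_mx 1%R.
have ones_ker : (ones <= kermx A^T)%MS.
  apply/sub_kermxP/matrixP => i j; rewrite !mxE -[RHS](rowsum0 j).
  by apply: eq_bigr => l _; rewrite !mxE mul1r.
have ones_neq0 : \rank ones != 0.
  rewrite mxrank_eq0; apply/eqP => /matrixP /(_ ord0 (Ordinal q_gt0)).
  by rewrite !mxE => /eqP; rewrite oner_eq0.
have := mxrankS ones_ker; rewrite mxrank_ker mxrank_tr; lia.
Qed.

Lemma bd_coef_edge (k : fieldType) n (a b x : 'I_n) : (a < b)%N ->
  bd_coef k [set a; b] [set x] =
  if x == a then (- 1)%R else if x == b then 1%R else 0%R.
Proof.
move=> ltab; have neqab : a != b by rewrite neq_ltn ltab.
rewrite /bd_coef sub1set !inE.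
case: (eqVneq x a) => [->|xa] /=.
  have -> : [set a; b] :\: [set a] = [set b].
    by apply/setP => z; rewrite !inE; case: (eqVneq z a) => [->|]; rewrite ?(negbTE neqab).
  rewrite cards1 big_set1.
  have -> : [set z in [set a; b] | (z < b)%N] = [set a].
    apply/setP => z; rewrite !inE; case: (eqVneq z a) => [->|za]; first by rewrite ltab.
    by rewrite orFb; case: (eqVneq z b) => [->|]; rewrite ?ltnn.
  by rewrite cards1 expr1.
case: (eqVneq x b) => [->|xb] //=.
have -> : [set a; b] :\: [set b] = [set a].
  apply/setP => z; rewrite !inE; case: (eqVneq z b) => [->|]; rewrite ?orbF //.
  by rewrite eq_sym (negbTE neqab).
rewrite cards1 big_set1.
have -> : [set z in [set a; b] | (z < a)%N] = set0.
  apply/setP => z; rewrite !inE; case: (eqVneq z a) => [->|_]; first by rewrite ltnn.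
  by case: (eqVneq z b) => [->|] //=; rewrite ltnNge ltnW.
by rewrite cards0 expr0.
Qed.

Lemma edge_bd_sum0 (k : fieldType) n (K : {set {set 'I_n}}) (F : {set 'I_n}) :
  is_complex K -> F \in faces K 2 ->
  (\sum_(H in faces K 1) bd_coef k F H)%R = 0%R.
Proof.
move=> cxK; rewrite inE => /andP [FK /cards2P [a [b [neqab defF]]]]; subst F.
wlog ltab : a b neqab FK / (a < b)%N.
  move=> sym; case: (ltngtP a b) => [|ltba|eqab]; first exact: sym.
    by rewrite setUC; apply: sym; rewrite 1?setUC // eq_sym.
  by rewrite (val_inj eqab) eqxx in neqab.
have vertex x : x \in [set a; b] -> [set x] \in faces K 1.
  by move=> Fx; rewrite inE cards1 andbT; apply: cxK FK _; rewrite sub1set.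
rewrite (bigD1 [set a]) ?vertex ?set21 //= (bigD1 [set b]) /=; last first.
  by rewrite vertex ?set22 // eqEsubset !sub1set !inE (negbTE neqab) andbF.
rewrite big1 => [|H /andP [/andP [H1 Ha] Hb]].
  by rewrite !bd_coef_edge // eqxx eq_sym (negbTE neqab) eqxx addr0 addNr.
move: H1; rewrite inE => /andP [_ /cards1P [x defH]]; subst H.
rewrite bd_coef_edge //; case: (eqVneq x a) => [xa|_]; first by rewrite xa eqxx in Ha.
by case: (eqVneq x b) => [xb|//]; rewrite xb eqxx in Hb.
Qed.

(* Euler characteristic bound: a complex with no 2-simplices and at least
   as many edges as (at least one) vertices has nonzero H_1, since then
   rank d_1 < #vertices <= #edges = dim C_1 while d_2 = 0. *)
Lemma graph_H1_nonzero (k : fieldType) n (K : {set {set 'I_n}}) :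
  is_complex K -> #|faces K 3| = 0 ->
  0 < #|faces K 1| <= #|faces K 2| -> H1_nonzero k K.
Proof.
move=> cxK no_tri /andP [verts_gt0 verts_le_edges].
have rank_d1 : \rank (bdmx k K 2) < #|faces K 1|.
  apply: rank_lt_of_zero_rowsums => // i.
  rewrite -[RHS](edge_bd_sum0 k cxK (enum_valP i)).
  rewrite (big_enum_val (fun H => bd_coef k (enum_val i) H)).
  by apply: eq_bigr => j _; rewrite mxE.
have d2_eq0 : \rank (bdmx k K 3) = 0.
  by apply/eqP; rewrite -leqn0; apply: leq_trans (rank_leq_row _) _; rewrite no_tri.
apply/negP => /mxrankS; rewrite d2_eq0 leqn0 mxrank_eq0 kermx_eq0 /row_free.
move=> /eqP full; move: rank_d1; rewrite full; lia.
Qed.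

Definition cyc_adj (m a b : nat) : Prop := b = a.+1 %% m \/ a = b.+1 %% m.

Lemma cyc_adj_sym (m a b : nat) : cyc_adj m a b -> cyc_adj m b a.
Proof. by rewrite /cyc_adj; tauto. Qed.

Lemma succ_mod_cases {a m : nat} : a < m ->
  (a.+1 < m /\ a.+1 %% m = a.+1) \/ (a.+1 = m /\ a.+1 %% m = 0).
Proof.
by rewrite leq_eqVlt => /orP [/eqP <-|lt]; [right|left]; rewrite ?modnn ?modn_small.
Qed.

Lemma cyc_adj_lt (m a b : nat) : a < b -> b < m -> cyc_adj m a b ->
  b = a.+1 \/ (a = 0 /\ b = m.-1).
Proof.
move=> ab bm; have am : a < m by lia.
by case: (succ_mod_cases am) (succ_mod_cases bm); rewrite /cyc_adj; lia.
Qed.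

Lemma cyc_triangle (m a b c : nat) : a < m -> b < m -> c < m ->
  a <> b -> b <> c -> a <> c ->
  cyc_adj m a b -> cyc_adj m b c -> cyc_adj m a c -> m = 3.
Proof.
wlog ab : a b c / a < b.
  move=> sorted am bm cm; case: (ltngtP a b) => [ab|ba|->] //; first exact: sorted.
  by move=> *; apply: (sorted b a c); auto using cyc_adj_sym.
wlog bc : a b c ab / b < c.
  move=> sorted am bm cm; case: (ltngtP b c) => [bc|cb|->] //; first exact: sorted.
  case: (ltngtP a c) => [ac|ca|->] // *; first by apply: (sorted a c b); auto using cyc_adj_sym.
  by apply: (sorted c a b); auto using cyc_adj_sym.
move=> am bm cm _ _ _ /(cyc_adj_lt ab bm) hab /(cyc_adj_lt bc cm) hbc.
by move=> /(@cyc_adj_lt m a c ltac:(lia) cm); lia.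
Qed.

Definition induced_cycle n (G : {set {set 'I_n}}) (m : nat) (u : nat -> 'I_n) : Prop :=
  [/\ 3 <= m,
      forall a b, a < m -> b < m -> u a = u b -> a = b,
      forall a, a < m -> [set u a; u (a.+1 %% m)] \in G,
      forall a b, a < m -> b < m -> a <> b -> [set u a; u b] \in G -> cyc_adj m a b
    & m = 3 -> [set u 0; u 1; u 2] \notin G].

Definition cycle_verts n (m : nat) (u : nat -> 'I_n) : {set 'I_n} :=
  [set u i | i : 'I_m].

Lemma induced_complex n (G : {set {set 'I_n}}) (W : {set 'I_n}) :
  is_complex G -> is_complex (induced G W).
Proof.
move=> cxG F H; rewrite !inE => /andP [FG FW] HF.
by rewrite (cxG F H FG HF) (subset_trans HF FW).
Qed.

Lemma card_induced_vertices n (G : {set {set 'I_n}}) (W : {set 'I_n}) :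
  #|faces (induced G W) 1| <= #|W|.
Proof.
apply: (@leq_trans #|[set [set x] | x in W]|); last exact: leq_imset_card.
apply/subset_leq_card/subsetP => F; rewrite !inE => /andP [/andP [_ FW]].
by move=> /cards1P [x defF]; apply/imsetP; exists x; rewrite // -sub1set -defF.
Qed.

Section InducedCycle.

Variables (k : fieldType) (n m : nat) (G : {set {set 'I_n}}) (u : nat -> 'I_n).
Hypotheses (cxG : is_complex G) (cycle_u : induced_cycle G m u).

Let W := cycle_verts m u.

Lemma cycle_vert a : a < m -> u a \in W.
Proof. by move=> am; apply/imsetP; exists (Ordinal am). Qed.

Lemma cycle_edges_count : m <= #|faces (induced G W) 2|.
Proof.
have [m3 inj_u edge _ _] := cycle_u.
have succ_lt a : a.+1 %% m < m by rewrite ltn_mod; lia.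
have neq_succ a : a < m -> u a != u (a.+1 %% m).
  move=> am; apply/eqP => /(inj_u _ _ am (succ_lt a)).
  by case: (succ_mod_cases am); lia.
pose E := [set [set u i; u (i.+1 %% m)] | i : 'I_m].
have cardE : #|E| = m.
  rewrite card_imset ?card_ord // => a b eab; apply: ord_inj.
  have [am bm] := (ltn_ord a, ltn_ord b).
  have mem_pair i j j' : i < m -> j < m -> j' < m ->
      u i \in [set u j; u j'] -> i = j \/ i = j'.
    by move=> im jm j'm; rewrite !inE => /orP [] /eqP /inj_u; auto.
  have ua : u a \in [set u b; u (b.+1 %% m)] by rewrite -eab set21.
  have ub : u b \in [set u a; u (a.+1 %% m)] by rewrite eab set21.
  have := mem_pair a b _ am bm (succ_lt b) ua.
  have := mem_pair b a _ bm am (succ_lt a) ub.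
  by case: (succ_mod_cases am) (succ_mod_cases bm); lia.
rewrite -cardE; apply/subset_leq_card/subsetP => F /imsetP [a _ ->].
by rewrite !inE cards2 neq_succ ?edge //= subUset !sub1set !cycle_vert.
Qed.

(* G[W] has no 2-simplices: their vertices would be pairwise adjacent. *)
Lemma cycle_no_triangle : #|faces (induced G W) 3| = 0.
Proof.
have [_ inj_u _ chordless no_tri] := cycle_u.
apply/eqP; rewrite cards_eq0; apply/eqP/setP => X; rewrite !inE.
apply/negP => /andP [/andP [XG XW] /eqP X3].
have /card_gt2P [x [y [z [[xX yX zX] [xy yz zx]]]]] : 2 < #|X| by rewrite X3.
have index w : w \in X -> exists2 a, a < m & w = u a.
  by move=> /(subsetP XW) /imsetP [a _ ->]; exists (nat_of_ord a).
have [a am ?] := index x xX; have [b bm ?] := index y yX.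
have [c cm ?] := index z zX; subst x y z.
have pair_face i j : u i \in X -> u j \in X -> [set u i; u j] \in G.
  by move=> iX jX; apply: cxG XG _; rewrite subUset !sub1set iX jX.
have distinct i j : u i != u j -> i <> j by move=> /eqP uij eij; rewrite eij in uij.
have [ab bc ac] : [/\ a <> b, b <> c & a <> c].
  by split; apply: distinct; rewrite // eq_sym.
have m3 : m = 3.
  apply: (cyc_triangle am bm cm ab bc ac); apply: chordless => //;
    exact: pair_face.
have inX i : i < 3 -> u i \in X.
  move=> i3; have : i = a \/ i = b \/ i = c by lia.
  by case=> [->|[->|->]].
move/negP: (no_tri m3); apply; apply: cxG XG _.
by rewrite !subUset !sub1set !inX.
Qed.

Lemma induced_cycle_H1 : H1_nonzero k (induced G W).
Proof.
have [m3 _ edge _ _] := cycle_u.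
apply: graph_H1_nonzero; [exact: induced_complex | exact: cycle_no_triangle |].
have vertex0 : [set u 0] \in faces (induced G W) 1.
  rewrite !inE cards1 sub1set cycle_vert ?andbT; last by lia.
  by apply: cxG (edge 0 _) _; rewrite ?sub1set ?set21 //; lia.
apply/andP; split; first by apply/card_gt0P; exists [set u 0].
apply: leq_trans cycle_edges_count.
apply: leq_trans (card_induced_vertices _ _) _.
by apply: leq_trans (leq_imset_card _ _) _; rewrite card_ord.
Qed.

End InducedCycle.

Lemma link_set0 n (G : {set {set 'I_n}}) : link G set0 = G.
Proof.
apply/setP => H; apply/imsetP/idP => [[F] | HG]; last first.
  by exists H; rewrite ?inE ?HG ?sub0set ?setD0.
by rewrite inE setD0 => /andP [FG _] ->.
Qed.

Lemma gr1_le_witness (k : fieldType) n (G : {set {set 'I_n}}) (W F : {set 'I_n}) :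
  W \subset verts G -> F \in G -> H1_nonzero k (induced (link G F) W) ->
  exists g, gr1 k G = Some g /\ g <= #|W|.
Proof.
move=> WV FG H1W.
have Wwit : W \in gr1_witnesses k G.
  by rewrite inE WV; apply/existsP; exists F; rewrite FG.
rewrite /gr1; case: eqP => [no_wit|_]; first by rewrite no_wit inE in Wwit.
exists (\big[minn/n.+1]_(W0 in gr1_witnesses k G) #|W0|); split => //.
by rewrite -minEnat -leEnat Order.TotalTheory.bigmin_le_cond.
Qed.

Lemma induced_cycle_gr1 (k : fieldType) n (G : {set {set 'I_n}}) m u :
  is_complex G -> induced_cycle G m u -> exists g, gr1 k G = Some g /\ g <= m.
Proof.
move=> cxG cycle_u; have [m3 _ edge _ _] := cycle_u.
have W_verts : cycle_verts m u \subset verts G.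
  apply/subsetP => _ /imsetP [a _ ->]; apply/bigcupP.
  by exists [set u a; u (a.+1 %% m)]; rewrite ?edge ?set21.
have empty_face : set0 \in G.
  by apply: cxG (edge 0 _) (sub0set _); lia.
have := induced_cycle_H1 k cxG cycle_u; rewrite -{1}(link_set0 G).
move=> /(gr1_le_witness W_verts empty_face) [g [gr1G le_g]].
exists g; split => //; apply: leq_trans le_g _.
by apply: leq_trans (leq_imset_card _ _) _; rewrite card_ord.
Qed.

Section ClosedWalk.

Variables (n L : nat) (G : {set {set 'I_n}}) (w : nat -> 'I_n).
Hypotheses (cxG : is_complex G) (L_ge2 : 2 <= L)
  (walk_step : forall j, j < L -> w j != w j.+1 /\ [set w j; w j.+1] \in G)
  (walk_closed : w L = w 0)
  (no_corner : forall j, 0 < j < L -> [set w j.-1; w j; w j.+1] \notin G).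

Lemma walk_vertex j : j <= L -> [set w j] \in G.
Proof.
move=> jL; have [j' j'L wj] : exists2 j', j' < L & w j = w j'.
  case: (ltngtP j L) => [jL'|Lj|->]; [by exists j | lia | exists 0; [lia | exact: walk_closed]].
by rewrite wj; apply: cxG (walk_step j'L).2 _; rewrite sub1set set21.
Qed.

Lemma walk_no_triangle p : p.+2 <= L -> [set w p; w p.+1; w p.+2] \notin G.
Proof. by move=> pL; apply: (no_corner (j := p.+1)); lia. Qed.

(* A chord of length d starting at p: w p and w (p + d) span a face
   (possibly a vertex, when they coincide). *)
Definition chord (d p : nat) : bool := (p + d <= L) && ([set w p; w (p + d)] \in G).

(* The closing of the walk is a chord of length L, so chords of length >= 2 exist. *)
Lemma long_chord_exists : exists d, (2 <= d) && [exists p : 'I_L.+1, chord d p].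
Proof.
exists L; rewrite L_ge2; apply/existsP; exists ord0.
by rewrite /chord add0n leqnn walk_closed setUid walk_vertex.
Qed.

Section ShortestChord.

Variables (d p : nat).
Hypotheses (d_ge2 : 2 <= d) (chord_p : chord d p)
  (shortest : forall e q, 2 <= e -> e < d -> ~~ chord e q).

Let u a := w (p + a).

Lemma segment_step a : a < d -> u a != u a.+1 /\ [set u a; u a.+1] \in G.
Proof. by move=> ad; rewrite /u addnS; apply: walk_step; move: chord_p => /andP []; lia. Qed.

Lemma segment_chordless a b : a < b <= d -> b - a < d ->
  [set u a; u b] \in G -> b = a.+1.
Proof.
move=> /andP [ab bd] short uab; apply/eqP; rewrite eqn_leq ab andbT leqNgt.
apply/negP => ab2; have /andP [pdL _] := chord_p.
have : chord (b - a) (p + a).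
  by rewrite /chord -addnA subnKC ?(ltnW ab) //; apply/andP; split; [lia | exact: uab].
by apply/negP; apply: shortest; lia.
Qed.

Lemma segment_inj a b : a < b <= d -> b - a < d -> u a != u b.
Proof.
move=> abd short; apply/eqP => uab; have /andP [pdL _] := chord_p.
have uab_face : [set u a; u b] \in G by rewrite uab setUid walk_vertex //; lia.
have eb := segment_chordless abd short uab_face; subst b.
by have [] := @segment_step a ltac:(lia); rewrite uab eqxx.
Qed.

Lemma cycle_inj_sorted m : (forall a b, a < b < m -> u a != u b) ->
  forall a b, a < m -> b < m -> u a = u b -> a = b.
Proof.
move=> distinct a b am bm uab; case: (ltngtP a b) => [ab|ba|//].
  by have := distinct a b; rewrite ab bm uab eqxx => /(_ isT).
by have := distinct b a; rewrite ba am uab eqxx => /(_ isT).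
Qed.

Lemma cycle_chordless_sorted m :
  (forall a b, a < b < m -> [set u a; u b] \in G -> cyc_adj m a b) ->
  forall a b, a < m -> b < m -> a <> b -> [set u a; u b] \in G -> cyc_adj m a b.
Proof.
move=> sorted a b am bm neq uab; case: (ltngtP a b) => [ab|ba|//].
  by apply: sorted; rewrite ?ab.
by apply/cyc_adj_sym/sorted; rewrite ?ba // setUC.
Qed.

Lemma closed_chord_cycle : u 0 = u d -> induced_cycle G d u.
Proof.
move=> ends; have /andP [pdL _] := chord_p.
have d3 : 3 <= d.
  rewrite ltnNge; apply/negP => d_le2; have d_eq2 : d = 2 by lia.
  have [_] := @segment_step 0 ltac:(lia); rewrite /u addn0 addn1 => edge0.
  have := @walk_no_triangle p ltac:(lia).
  have -> : w p.+2 = w p by move: ends; rewrite /u addn0 d_eq2 addn2.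
  by rewrite setUAC setUid edge0.
split => //.
- by apply: cycle_inj_sorted => a b abd; apply: segment_inj; lia.
- move=> a ad; case: (succ_mod_cases ad) => [[_ ->]|[ad1 ->]].
    exact: (segment_step ad).2.
  by rewrite ends -ad1; exact: (segment_step ad).2.
- apply: cycle_chordless_sorted => a b /andP [ab bd] uab; left.
  by rewrite (segment_chordless _ _ uab) ?modn_small; lia.
- move=> d_eq3; rewrite /u addn0 addn1 addn2; apply: walk_no_triangle; lia.
Qed.

Lemma open_chord_cycle : u 0 != u d -> induced_cycle G d.+1 u.
Proof.
move=> ends; have /andP [pdL chord_face] := chord_p.
have distinct a b : a < b < d.+1 -> u a != u b.
  move=> abd; have [[-> ->] | short] : (a = 0 /\ b = d) \/ b - a < d by lia.
    exact: ends.
  exact: segment_inj.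
split => //.
- by apply: cycle_inj_sorted => a b abd; apply: distinct.
- move=> a ad; case: (succ_mod_cases ad) => [[ad1 ->]|[ad1 ->]].
    exact: (@segment_step a ltac:(lia)).2.
  have -> : a = d by lia.
  by rewrite setUC /u addn0.
- apply: cycle_chordless_sorted => a b /andP [ab bd] uab.
  have [[a0 bd'] | short] : (a = 0 /\ b = d) \/ b - a < d by lia.
    by right; rewrite a0 bd' modnn.
  by left; rewrite (segment_chordless _ _ uab) ?modn_small; lia.
- move=> d_eq2; rewrite /u addn0 addn1 addn2; apply: walk_no_triangle; lia.
Qed.

End ShortestChord.

(* Every such closed walk contains an induced cycle of length at most L:
   take a shortest chord of length >= 2 and close it up. *)
Lemma closed_walk_induced_cycle : exists m u, m <= L /\ induced_cycle G m u.
Proof.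
have [d /andP [d_ge2 /existsP [[p pL] /= chord_p]] minimal] := ex_minnP long_chord_exists.
have shortest e q : 2 <= e -> e < d -> ~~ chord e q.
  move=> e2 ed; apply/negP => chord_q; have /andP [qeL _] := chord_q.
  have qL : q < L.+1 by lia.
  suff : d <= e by lia.
  by apply: minimal; rewrite e2; apply/existsP; exists (Ordinal qL).
have /andP [pdL chord_face] := chord_p.
case: (eqVneq (w p) (w (p + d))) => [ends|ends].
  exists d, (fun a => w (p + a)); split; first by lia.
  by apply: closed_chord_cycle => //; rewrite addn0.
exists d.+1, (fun a => w (p + a)); split; last by apply: open_chord_cycle; rewrite ?addn0.
rewrite ltn_neqAle (_ : d <= L) ?andbT; last by lia.
apply/eqP => dL; have p0 : p = 0 by lia.
by move: ends; rewrite p0 add0n dL walk_closed eqxx.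
Qed.

End ClosedWalk.

Section Rotation.

Variables (n r s : nat) (G : {set {set 'I_n}}) (v : nat -> 'I_n).
Hypotheses (r_gt0 : 0 < r) (s_lt_r : s < r).

Let w j := v ((s + j) %% r).

Lemma rotate_succ j : w j.+1 = v (((s + j) %% r).+1 %% r).
Proof. by rewrite /w addnS -[((s + j) %% r).+1]addn1 modnDml addn1. Qed.

Lemma rotate_pred j : 0 < j -> w j.-1 = v (((s + j) %% r + r).-1 %% r).
Proof.
move=> j_gt0; rewrite /w; congr v; set x := (s + j) %% r.
rewrite (_ : (x + r).-1 = x + r.-1); last by lia.
by rewrite /x modnDml (_ : s + j + r.-1 = s + j.-1 + r) ?modnDr //; lia.
Qed.

Lemma rotate_closed : w r = w 0.
Proof. by rewrite /w addn0 modnDr. Qed.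

Lemma rotate_step :
  (forall i, i < r -> (v i != v (i.+1 %% r)) && ([set v i; v (i.+1 %% r)] \in G)) ->
  forall j, j < r -> w j != w j.+1 /\ [set w j; w j.+1] \in G.
Proof.
move=> steps j _; rewrite rotate_succ.
by have /andP [] := steps _ (ltn_pmod (s + j) r_gt0).
Qed.

(* Only the corner at position s of v becomes the endpoint of w. *)
Lemma rotate_corner :
  (forall t, t < r -> t <> s -> [set v ((t + r).-1 %% r); v t; v (t.+1 %% r)] \notin G) ->
  forall j, 0 < j < r -> [set w j.-1; w j; w j.+1] \notin G.
Proof.
move=> corners j /andP [j_gt0 jr]; rewrite rotate_pred // rotate_succ.
apply: corners; first exact: ltn_pmod.
move=> shift_s; have : s + j == s + 0 %[mod r] by rewrite addn0 shift_s modn_small.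
by rewrite eqn_modDl mod0n modn_small //; lia.
Qed.

End Rotation.

Lemma at_most_one_exception (r : nat) (P : pred nat) : 0 < r ->
  (forall i j, i < r -> j < r -> P i -> P j -> i = j) ->
  exists2 s, s < r & forall t, t < r -> t <> s -> ~~ P t.
Proof.
move=> r_gt0 uniqP; case: (boolP [exists i : 'I_r, P i]) => [/existsP [i Pi]|/existsPn noP].
  exists i => // t tr ts; apply/negP => Pt.
  exact: ts (uniqP _ _ tr (ltn_ord i) Pt Pi).
by exists 0 => // t tr _; apply: (noP (Ordinal tr)).
Qed.

Theorem mainTheorem4 (k : fieldType) (n : nat) (G : {set {set 'I_n}})
  (r : nat) (v : nat -> 'I_n) :
  is_complex G ->
  3 <= r ->
  (forall i, i < r ->
     (v i != v (i.+1 %% r)) && ([set v i; v (i.+1 %% r)] \in G)) ->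
  (forall i j, i < r -> j < r ->
     [set v ((i + r).-1 %% r); v i; v (i.+1 %% r)] \in G ->
     [set v ((j + r).-1 %% r); v j; v (j.+1 %% r)] \in G ->
     i = j) ->
  exists g, gr1 k G = Some g /\ g <= r.
Proof.
move=> cxG r3 steps one_corner; have r_gt0 : 0 < r by lia.
have [s s_lt_r corners] := at_most_one_exception
  (P := fun t => [set v ((t + r).-1 %% r); v t; v (t.+1 %% r)] \in G) r_gt0 one_corner.
have [m [u [m_le_r cycle_u]]] := closed_walk_induced_cycle cxG (ltnW r3)
  (rotate_step s r_gt0 steps) (rotate_closed r s v)
  (rotate_corner r_gt0 s_lt_r corners).
have [g [gr1G g_le_m]] := induced_cycle_gr1 k cxG cycle_u.
by exists g; split => //; apply: leq_trans g_le_m m_le_r.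
Qed.
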